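(* For every $n>1$, the logics $\mathrm{Log}_{=1}(\mathbb{R})$ and $\mathrm{Log}_{=1}(\mathbb{R}^n)$ are incomparable under inclusion (neither contains the other).
   Context: Modal formulas are built from a countable set of propositional variables using $\bot$, $\to$ and one unary modality $\lozenge$. A frame is a pair $(X,R)$; a valuation assigns subsets of $X$ to variables; $x\models\lozenge\varphi$ iff there is $y$ with $xRy$ and $y\models\varphi$. A formula is valid in a frame if true at every point under every valuation. For a metric space $(X,d)$, $\mathrm{Log}_{=1}(X)$ is the set of modal formulas valid in the frame $(X,R_{=1})$, where $xR_{=1}y$ iff $d(x,y)=1$. $\mathbb{R}^n$ carries the Euclidean metric. *)

From Stdlib Require Import Reals.
From mathcomp Require Import all_boot all_algebra.
From mathcomp Require Import Rstruct.

Set Implicit Arguments.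
Unset Strict Implicit.
Unset Printing Implicit Defensive.

Inductive formula : Type :=
  | Var : nat -> formula
  | Bot : formula
  | Imp : formula -> formula -> formula
  | Dia : formula -> formula.

Fixpoint sat (X : Type) (Rel : X -> X -> Prop) (V : nat -> X -> Prop)
    (x : X) (phi : formula) : Prop :=
  match phi with
  | Var p => V p x
  | Bot => False
  | Imp a b => sat Rel V x a -> sat Rel V x b
  | Dia a => exists y, Rel x y /\ sat Rel V y a
  end.

Definition valid_in_frame (X : Type) (Rel : X -> X -> Prop) (phi : formula) : Prop :=
  forall (V : nat -> X -> Prop) (x : X), sat Rel V x phi.

Definition R_eq1 (X : Type) (d : X -> X -> R) : X -> X -> Prop :=
  fun x y => d x y = 1%R.

Definition Log_eq1 (X : Type) (d : X -> X -> R) : formula -> Prop :=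
  fun phi => valid_in_frame (R_eq1 d) phi.

Definition dist_R (x y : R) : R := Rabs (x - y).

Definition dist_Rn (n : nat) (x y : 'rV[R]_n) : R :=
  sqrt (\sum_(i < n) (x ord0 i - y ord0 i) ^+ 2)%R.

(* Two frame properties separate the line from R^n (n > 1), and both are
   modally definable.  On the line the unit-distance successors of x are only
   x - 1 and x + 1, so no point has three distinct successors and there is no
   closed walk of odd length; in R^n every point has infinitely many
   successors and is a vertex of a unit equilateral triangle.  The formula
   p -> ◇◇◇p is valid exactly when every point lies on a 3-cycle, and
   ◇p -> ◇q -> ◇r -> ¬◇(p ∧ q) -> ¬◇(p ∧ r) -> ◇(q ∧ r) exactly when no point
   has three distinct successors. *)
From Stdlib Require Import Reals Classical.
From mathcomp Require Import all_boot all_algebra.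
From mathcomp Require Import Rstruct lra.

Import GRing.Theory Num.Theory.

Definition Neg (a : formula) : formula := Imp a Bot.
Definition Conj (a b : formula) : formula := Neg (Imp a (Neg b)).

Definition cycle3_formula : formula := Imp (Var 0) (Dia (Dia (Dia (Var 0)))).

Definition two_successors_formula : formula :=
  let p := Var 0 in let q := Var 1 in let r := Var 2 in
  Imp (Dia p) (Imp (Dia q) (Imp (Dia r)
    (Imp (Neg (Dia (Conj p q))) (Imp (Neg (Dia (Conj p r))) (Dia (Conj q r)))))).

Section FrameCorrespondence.

Variables (X : Type) (Rel : X -> X -> Prop).

Definition every_point_on_3cycle : Prop :=
  forall x, exists y z, Rel x y /\ Rel y z /\ Rel z x.

Definition at_most_two_successors : Prop :=
  forall x y0 y1 y2, Rel x y0 -> Rel x y1 -> Rel x y2 ->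
  y0 = y1 \/ y0 = y2 \/ y1 = y2.

Lemma valid_cycle3_formulaP :
  valid_in_frame Rel cycle3_formula <-> every_point_on_3cycle.
Proof.
split=> [valid x | cyc V x /= px].
- have /= [y [xy [z [yz [w [zw ew]]]]]] := valid (fun _ w => w = x) x erefl.
  by subst w; exists y, z.
- have [y [z [xy [yz zx]]]] := cyc x.
  by exists y; split=> //; exists z; split=> //; exists x.
Qed.

Lemma valid_two_successors_formulaP :
  valid_in_frame Rel two_successors_formula <-> at_most_two_successors.
Proof.
split=> [valid x y0 y1 y2 xy0 xy1 xy2 | two V x /=].
- apply: NNPP => distinct.
  pose V k w := match k with 0 => w = y0 | 1 => w = y1 | _ => w = y2 end.
  have /= := valid V x.
  case/(_ (ex_intro _ y0 (conj xy0 erefl)) (ex_intro _ y1 (conj xy1 erefl))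
          (ex_intro _ y2 (conj xy2 erefl))).
  + by move=> [w [_ pq]]; apply: pq => -> e; apply: distinct; left.
  + by move=> [w [_ pr]]; apply: pr => -> e; apply: distinct; right; left.
  + by move=> w [_ qr]; apply: qr => -> e; apply: distinct; right; right.
- move=> [y0 [xy0 p0]] [y1 [xy1 q1]] [y2 [xy2 r2]] no_pq no_pr.
  case: (two x y0 y1 y2 xy0 xy1 xy2) => [e | [e | e]]; subst.
  + by case: no_pq; exists y1; split=> // /(_ p0); apply.
  + by case: no_pr; exists y2; split=> // /(_ p0); apply.
  + by exists y2; split=> // /(_ q1); apply.
Qed.

End FrameCorrespondence.

Arguments every_point_on_3cycle {X}.
Arguments at_most_two_successors {X}.
Arguments valid_cycle3_formulaP {X Rel}.
Arguments valid_two_successors_formulaP {X Rel}.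

Local Open Scope ring_scope.

Lemma dist_R_eq1 (x y : R) : R_eq1 dist_R x y -> y = x - 1 \/ y = x + 1.
Proof.
rewrite /R_eq1 /dist_R RabsE RminusE => /eqP; rewrite eqr_norml.
by case/andP => /orP[] /eqP h _; [left | right]; lra.
Qed.

Lemma line_at_most_two_successors : at_most_two_successors (R_eq1 dist_R).
Proof.
move=> x y0 y1 y2 /dist_R_eq1 e0 /dist_R_eq1 e1 /dist_R_eq1 e2.
by case: e0 => e0; case: e1 => e1; case: e2 => e2;
  first [left; lra | right; left; lra | right; right; lra].
Qed.

Lemma line_not_every_point_on_3cycle : ~ every_point_on_3cycle (R_eq1 dist_R).
Proof.
move=> /(_ 0) [y [z [/dist_R_eq1 e1 [/dist_R_eq1 e2 /dist_R_eq1 e3]]]].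
by case: e1 => e1; case: e2 => e2; case: e3 => e3; lra.
Qed.

Definition plane_vec (m : nat) (a b : R) : 'rV[R]_m.+2 := \row_i [:: a; b]`_i.

(* Without this, numerals given to [plane_vec] would be read in Stdlib's
   [R_scope] (as [IZR] constants, opaque to [lra]/[nra] of algebra-tactics). *)
Arguments plane_vec {m} (a b)%_ring_scope.

Lemma plane_vec0 m : plane_vec 0 0 = 0 :> 'rV[R]_m.+2.
Proof.
by apply/matrixP => i j; rewrite !mxE; case: j => -[|[|k]] //= _; rewrite nth_nil.
Qed.

Lemma dist_Rn_translate n (x u v : 'rV[R]_n) :
  dist_Rn (x + u) (x + v) = dist_Rn u v.
Proof.
rewrite /dist_Rn; congr sqrt; apply: eq_bigr => i _.
by rewrite !mxE [x _ _ + u _ _]addrC addrKA.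
Qed.

Lemma dist_Rn_plane m a b c d :
  dist_Rn (plane_vec a b) (plane_vec c d : 'rV[R]_m.+2) =
  Num.sqrt ((a - c) ^+ 2 + (b - d) ^+ 2).
Proof.
rewrite /dist_Rn RsqrtE 2!big_ord_recl big1 ?addr0 => [|i _]; first by rewrite !mxE.
by rewrite !mxE /= subrr expr2 mulr0.
Qed.

Lemma unit_dist_plane m (x : 'rV[R]_m.+2) a b c d :
  (a - c) ^+ 2 + (b - d) ^+ 2 = 1 ->
  R_eq1 (@dist_Rn m.+2) (x + plane_vec a b) (x + plane_vec c d).
Proof. by move=> h; rewrite /R_eq1 dist_Rn_translate dist_Rn_plane h sqrtr1. Qed.

Lemma Rn_every_point_on_3cycle m : every_point_on_3cycle (R_eq1 (@dist_Rn m.+2)).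
Proof.
move=> x; have x0 : x + plane_vec 0 0 = x by rewrite plane_vec0 addr0.
have s3 : Num.sqrt 3 ^+ 2 = 3 :> R by rewrite sqr_sqrtr.
exists (x + plane_vec 1 0), (x + plane_vec (1 / 2) (Num.sqrt 3 / 2)).
split; [rewrite -{1}x0 | split; [| rewrite -{2}x0]];
  by apply: unit_dist_plane; rewrite !expr2 in s3 *; nra.
Qed.

Lemma Rn_not_at_most_two_successors m :
  ~ at_most_two_successors (R_eq1 (@dist_Rn m.+2)).
Proof.
move=> two.
have on_unit_circle a b :
    a ^+ 2 + b ^+ 2 = 1 -> R_eq1 (@dist_Rn m.+2) 0 (plane_vec a b).
  move=> h; rewrite -(plane_vec0 m) -[plane_vec 0 0]add0r -[plane_vec a b]add0r.
  by apply: unit_dist_plane; rewrite !sub0r !sqrrN.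
have first_coord a b : @plane_vec m a b ord0 ord0 = a by rewrite mxE.
have := two 0 _ _ _ (on_unit_circle 1 0 ltac:(nra))
  (on_unit_circle (-1) 0 ltac:(nra)) (on_unit_circle 0 1 ltac:(nra)).
case=> [|[|]] /(congr1 (fun v : 'rV[R]_m.+2 => v ord0 ord0));
  by rewrite !first_coord; lra.
Qed.

Theorem proposition3p10 (n : nat) (hn : (1 < n)%N) :
  ~ (forall phi : formula, Log_eq1 dist_R phi -> Log_eq1 (@dist_Rn n) phi) /\
  ~ (forall phi : formula, Log_eq1 (@dist_Rn n) phi -> Log_eq1 dist_R phi).
Proof.
case: n hn => [|[|m]] // _; split=> incl.
- apply: (@Rn_not_at_most_two_successors m).
  apply/valid_two_successors_formulaP/incl.
  exact/valid_two_successors_formulaP/line_at_most_two_successors.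
- apply: line_not_every_point_on_3cycle.
  apply/valid_cycle3_formulaP/incl.
  exact/valid_cycle3_formulaP/Rn_every_point_on_3cycle.
Qed.
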